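(* Let $\mathbf A=(A;\cdot,\to,\leadsto,1)$ be a pseudo-hoop and let $M\subseteq A$ be any subset. Define $f:M^\perp\times M^{\perp\perp}\to A$ by $f(x,y)=x\wedge y$. Then $f$ is injective and, for all $(x_1,y_1),(x_2,y_2)\in M^\perp\times M^{\perp\perp}$, $$f(x_1,y_1)\cdot f(x_2,y_2)=f(x_1\cdot x_2,\,y_1\cdot y_2),\quad f(x_1,y_1)\to f(x_2,y_2)=f(x_1\to x_2,\,y_1\to y_2),$$ $$f(x_1,y_1)\leadsto f(x_2,y_2)=f(x_1\leadsto x_2,\,y_1\leadsto y_2);$$ i.e. $f$ is an embedding of the direct product pseudo-hoop $M^\perp\times M^{\perp\perp}$ into $\mathbf A$.
   Context: A pseudo-hoop is an algebra $(A;\cdot,\to,\leadsto,1)$ of type $\langle 2,2,2,0\rangle$ such that for all $x,y,z\in A$: $x\cdot 1=x=1\cdot x$; $x\to x=1=x\leadsto x$; $(x\cdot y)\to z=x\to(y\to z)$; $(x\cdot y)\leadsto z=y\leadsto(x\leadsto z)$; and $(x\to y)\cdot x=(y\to x)\cdot y=x\cdot(x\leadsto y)=y\cdot(y\leadsto x)$. Setting $x\le y$ iff $x\to y=1$ (equivalently $x\leadsto y=1$) gives a partial order with greatest element $1$ in which $x\wedge y=(x\to y)\cdot x$ exists for all $x,y$. For $x,y\in A$, ''$x\vee y=1$'' means that the supremum of $\{x,y\}$ exists and equals $1$. For $M\subseteq A$, $M^\perp=\{x\in A\mid x\vee y=1\text{ for every }y\in M\}$ and $M^{\perp\perp}=(M^\perp)^\perp$.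 The sets $M^\perp$ and $M^{\perp\perp}$ contain $1$ and are closed under $\cdot,\to,\leadsto$, so $M^\perp\times M^{\perp\perp}$ is a pseudo-hoop with componentwise operations. *)

From Stdlib Require Import Classical.

Record PseudoHoop := {
  ph_car :> Type;
  ph_mul : ph_car -> ph_car -> ph_car;
  ph_imp : ph_car -> ph_car -> ph_car;
  ph_limp : ph_car -> ph_car -> ph_car;
  ph_one : ph_car;
  ph_mul1r : forall x, ph_mul x ph_one = x;
  ph_mul1l : forall x, ph_mul ph_one x = x;
  ph_impxx : forall x, ph_imp x x = ph_one;
  ph_limpxx : forall x, ph_limp x x = ph_one;
  ph_imp_mul : forall x y z, ph_imp (ph_mul x y) z = ph_imp x (ph_imp y z);
  ph_limp_mul : forall x y z, ph_limp (ph_mul x y) z = ph_limp y (ph_limp x z);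
  ph_div1 : forall x y, ph_mul (ph_imp x y) x = ph_mul (ph_imp y x) y;
  ph_div2 : forall x y, ph_mul (ph_imp y x) y = ph_mul x (ph_limp x y);
  ph_div3 : forall x y, ph_mul x (ph_limp x y) = ph_mul y (ph_limp y x)
}.

Arguments ph_mul {p}. Arguments ph_imp {p}. Arguments ph_limp {p}. Arguments ph_one {p}.

Section Defs.
Variable A : PseudoHoop.

Definition ph_le (x y : A) : Prop := ph_imp x y = ph_one.

Definition ph_meet (x y : A) : A := ph_mul (ph_imp x y) x.

(* "x v y = 1": the supremum of {x,y} exists and equals 1, i.e. 1 is an upper
   bound of x,y (always true) and below every upper bound of x and y. *)
Definition join_is_one (x y : A) : Prop :=
  ph_le x ph_one /\ ph_le y ph_one /\
  forall u : A, ph_le x u -> ph_le y u -> ph_le ph_one u.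

Definition perp (M : A -> Prop) : A -> Prop :=
  fun x => forall y, M y -> join_is_one x y.

End Defs.

(* For x in M^perp and y in M^perp^perp we have x v y = 1, and for such a
   complementary pair y -> x = y ~> x = x, whence x /\ y = x . y = y . x.
   Applied to the four pairs (x_i, y_j), this makes x_1 . y_1 . x_2 . y_2
   rearrangeable, lets -> and ~> distribute over /\ and be absorbed by the
   other coordinate, and gives injectivity through
   x_2 <= y_2 -> (x_2 /\ y_2) = y_2 -> (x_1 /\ y_1) <= y_2 -> x_1 = x_1. *)

Section PseudoHoopTheory.
Variable A : PseudoHoop.
Local Notation "x ** y" := (@ph_mul A x y) (at level 40, left associativity).
Local Notation "x ==> y" := (@ph_imp A x y) (at level 55, right associativity).
Local Notation "x ~~> y" := (@ph_limp A x y) (at level 55, right associativity).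
Local Notation one := (@ph_one A).
Local Notation le := (ph_le A).
Local Notation meet := (ph_meet A).
Local Notation join_one := (join_is_one A).

Lemma le_refl (a : A) : le a a.
Proof. apply ph_impxx. Qed.

Lemma le_antisym (a b : A) : le a b -> le b a -> a = b.
Proof.
  unfold ph_le; intros Hab Hba.
  rewrite <- (ph_mul1l A a), <- (ph_mul1l A b), <- Hab at 1. rewrite <- Hba.
  apply ph_div1.
Qed.

Lemma one_imp (z : A) : one ==> z = z.
Proof.
  apply le_antisym; unfold ph_le.
  - pose proof (ph_imp_mul A (one ==> z) one z) as H.
    rewrite ph_mul1r, ph_impxx in H. exact H.
  - pose proof (ph_imp_mul A z one z) as H.
    rewrite ph_mul1r, ph_impxx in H. symmetry; exact H.
Qed.

Lemma imp_one (x : A) : x ==> one = one.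
Proof.
  pose proof (ph_imp_mul A (x ==> one) x one) as H.
  pose proof (ph_div1 A one x) as E. rewrite ph_mul1r, one_imp in E.
  rewrite ph_impxx, <- E in H. exact H.
Qed.

Lemma le_one (a : A) : le a one.
Proof. apply imp_one. Qed.

Lemma le_one_eq (u : A) : le one u -> u = one.
Proof. unfold ph_le; rewrite one_imp; auto. Qed.

Lemma le_limp (a b : A) : le a b <-> a ~~> b = one.
Proof.
  unfold ph_le; split; intro H.
  - assert (E : a ** (a ~~> b) = a).
    { rewrite ph_div3, <- ph_div2, H, ph_mul1l. reflexivity. }
    pose proof (ph_limp_mul A a (a ~~> b) b) as H'.
    rewrite E, ph_limpxx in H'. exact H'.
  - assert (E : (a ==> b) ** a = a).
    { rewrite ph_div2, ph_div3, H, ph_mul1r. reflexivity. }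
    pose proof (ph_imp_mul A (a ==> b) a b) as H'.
    rewrite E, ph_impxx in H'. exact H'.
Qed.

Lemma le_trans (a b c : A) : le a b -> le b c -> le a c.
Proof.
  unfold ph_le; intros Hab Hbc.
  assert (E : a = (b ==> a) ** b).
  { rewrite <- ph_div1, Hab, ph_mul1l. reflexivity. }
  rewrite E, ph_imp_mul, Hbc, imp_one. reflexivity.
Qed.

Lemma resid (a b c : A) : le (a ** b) c <-> le a (b ==> c).
Proof. unfold ph_le; rewrite ph_imp_mul; tauto. Qed.

Lemma lresid (a b c : A) : le (b ** a) c <-> le a (b ~~> c).
Proof. rewrite !le_limp, ph_limp_mul; tauto. Qed.

Lemma mul_le_l (a b : A) : le (a ** b) a.
Proof. apply le_limp. rewrite ph_limp_mul, ph_limpxx. apply le_limp, le_one. Qed.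

Lemma mul_le_r (a b : A) : le (a ** b) b.
Proof. unfold ph_le. rewrite ph_imp_mul, ph_impxx. apply imp_one. Qed.

Lemma mul_assoc (a b c : A) : a ** b ** c = a ** (b ** c).
Proof.
  assert (H : forall z, (a ** b ** c) ==> z = (a ** (b ** c)) ==> z).
  { intro z. rewrite !ph_imp_mul. reflexivity. }
  apply le_antisym; unfold ph_le; [rewrite H | rewrite <- H]; apply ph_impxx.
Qed.

Lemma mul_mono_l (p q a : A) : le p q -> le (p ** a) (q ** a).
Proof.
  intro H. apply resid. apply le_trans with q; [exact H|]. apply resid, le_refl.
Qed.

Lemma mul_mono_r (p q a : A) : le p q -> le (a ** p) (a ** q).
Proof.
  intro H. apply lresid. apply le_trans with q; [exact H|]. apply lresid, le_refl.
Qed.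

Lemma imp_mono (a b c : A) : le b c -> le (a ==> b) (a ==> c).
Proof.
  intro H. apply resid. apply le_trans with b; [|exact H]. apply resid, le_refl.
Qed.

Lemma limp_mono (a b c : A) : le b c -> le (a ~~> b) (a ~~> c).
Proof.
  intro H. apply lresid. apply le_trans with b; [|exact H]. apply lresid, le_refl.
Qed.

Lemma meet_le_l (a b : A) : le (meet a b) a.
Proof. unfold ph_meet. rewrite ph_div1. apply resid, le_refl. Qed.

Lemma meet_le_r (a b : A) : le (meet a b) b.
Proof. apply resid, le_refl. Qed.

Lemma meet_glb (a b c : A) : le c a -> le c b -> le c (meet a b).
Proof.
  intros Ha Hb.
  assert (E : c = (a ==> c) ** a).
  { rewrite <- ph_div1, Ha, ph_mul1l. reflexivity. }
  rewrite E at 1. apply mul_mono_l, imp_mono, Hb.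
Qed.

Lemma imp_meet (z a b : A) : z ==> meet a b = meet (z ==> a) (z ==> b).
Proof.
  apply le_antisym.
  - apply meet_glb; apply imp_mono; [apply meet_le_l | apply meet_le_r].
  - apply -> resid. apply meet_glb.
    + apply le_trans with ((z ==> a) ** z);
        [apply mul_mono_l, meet_le_l | apply resid, le_refl].
    + apply le_trans with ((z ==> b) ** z);
        [apply mul_mono_l, meet_le_r | apply resid, le_refl].
Qed.

Lemma limp_meet (z a b : A) : z ~~> meet a b = meet (z ~~> a) (z ~~> b).
Proof.
  apply le_antisym.
  - apply meet_glb; apply limp_mono; [apply meet_le_l | apply meet_le_r].
  - apply -> lresid. apply meet_glb.
    + apply le_trans with (z ** (z ~~> a));
        [apply mul_mono_r, meet_le_l | apply lresid, le_refl].
    + apply le_trans with (z ** (z ~~> b));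
        [apply mul_mono_r, meet_le_r | apply lresid, le_refl].
Qed.

Lemma join_sym (x y : A) : join_one x y -> join_one y x.
Proof. intros [Hx [Hy Hlub]]. repeat split; auto. Qed.

Lemma join_up (a b y : A) : le a b -> join_one a y -> join_one b y.
Proof.
  intros Hab [_ [_ Hlub]]. repeat split; try apply le_one.
  intros u Hb Hy. apply Hlub; [apply le_trans with b|]; assumption.
Qed.

Lemma join_mul (a b y : A) :
  join_one a y -> join_one b y -> join_one (a ** b) y.
Proof.
  intros [_ [_ Ha]] [_ [_ Hb]]. repeat split; try apply le_one.
  intros u Hu Hy. apply Hb; [|exact Hy].
  apply le_one_eq, Ha; [apply resid, Hu|].
  apply le_trans with u; [exact Hy | apply resid, mul_le_l].
Qed.

(* Both y and y -> x lie below (y -> x) ~> x, so 1 does. *)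
Lemma join_imp (x y : A) : join_one x y -> y ==> x = x.
Proof.
  intros [_ [_ Hlub]]. apply le_antisym; [|apply resid, mul_le_l].
  apply le_limp, le_one_eq, Hlub.
  - apply lresid, mul_le_r.
  - apply lresid, resid, le_refl.
Qed.

Lemma join_limp (x y : A) : join_one x y -> y ~~> x = x.
Proof.
  intros [_ [_ Hlub]]. apply le_antisym; [|apply lresid, mul_le_r].
  apply le_one_eq, Hlub.
  - apply resid, mul_le_l.
  - apply resid, lresid, le_refl.
Qed.

Lemma join_meet_mul (x y : A) : join_one x y -> meet x y = x ** y.
Proof. intro J. unfold ph_meet. rewrite ph_div1, join_imp by exact J. reflexivity. Qed.

Lemma join_meet_mulC (x y : A) : join_one x y -> meet x y = y ** x.
Proof. intro J. unfold ph_meet. rewrite join_imp by (apply join_sym, J). reflexivity. Qed.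

Lemma join_mulC (x y : A) : join_one x y -> x ** y = y ** x.
Proof. intro J. rewrite <- join_meet_mul, join_meet_mulC by exact J. reflexivity. Qed.

Lemma perp_perp_join (M : A -> Prop) (x y : A) :
  perp A M x -> perp A (perp A M) y -> join_one x y.
Proof. intros Hx Hy. apply join_sym, Hy, Hx. Qed.

Lemma meet_eq_le (x1 y1 x2 y2 : A) :
  join_one x1 y2 -> join_one x2 y1 -> join_one x2 y2 ->
  meet x1 y1 = meet x2 y2 -> le x2 x1 /\ le y2 y1.
Proof.
  intros J12 J21 J22 E. split.
  - apply le_trans with (y2 ==> meet x1 y1).
    + rewrite E, join_meet_mul by exact J22. apply resid, le_refl.
    + rewrite <- (join_imp x1 y2) at 2 by exact J12. apply imp_mono, meet_le_l.
  - apply le_trans with (x2 ==> meet x1 y1).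
    + rewrite E, join_meet_mulC by exact J22. apply resid, le_refl.
    + rewrite <- (join_imp y1 x2) at 2 by (apply join_sym, J21).
      apply imp_mono, meet_le_r.
Qed.

Section ComplementaryPairs.
Variables x1 y1 x2 y2 : A.
Hypotheses (J11 : join_one x1 y1) (J12 : join_one x1 y2)
           (J21 : join_one x2 y1) (J22 : join_one x2 y2).

Lemma meet_inj : meet x1 y1 = meet x2 y2 -> x1 = x2 /\ y1 = y2.
Proof.
  intro E.
  destruct (meet_eq_le x1 y1 x2 y2 J12 J21 J22 E) as [Hx21 Hy21].
  destruct (meet_eq_le x2 y2 x1 y1 J21 J12 J11 (eq_sym E)) as [Hx12 Hy12].
  split; apply le_antisym; assumption.
Qed.

Lemma meet_mul : meet x1 y1 ** meet x2 y2 = meet (x1 ** x2) (y1 ** y2).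
Proof.
  assert (J : join_one (x1 ** x2) (y1 ** y2)).
  { apply join_mul; apply join_sym, join_mul; apply join_sym; assumption. }
  rewrite !join_meet_mul by assumption.
  rewrite !mul_assoc, <- (mul_assoc y1), <- (join_mulC x2 y1 J21), mul_assoc.
  reflexivity.
Qed.

Lemma meet_imp : meet x1 y1 ==> meet x2 y2 = meet (x1 ==> x2) (y1 ==> y2).
Proof.
  assert (J : join_one (y1 ==> y2) x1).
  { apply join_up with y2; [apply resid, mul_le_l | apply join_sym, J12]. }
  rewrite (join_meet_mul x1 y1 J11), ph_imp_mul, imp_meet, (join_imp x2 y1 J21).
  rewrite imp_meet, (join_imp (y1 ==> y2) x1 J). reflexivity.
Qed.

Lemma meet_limp : meet x1 y1 ~~> meet x2 y2 = meet (x1 ~~> x2) (y1 ~~> y2).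
Proof.
  assert (J : join_one (y1 ~~> y2) x1).
  { apply join_up with y2; [apply lresid, mul_le_r | apply join_sym, J12]. }
  rewrite (join_meet_mulC x1 y1 J11), ph_limp_mul, limp_meet, (join_limp x2 y1 J21).
  rewrite limp_meet, (join_limp (y1 ~~> y2) x1 J). reflexivity.
Qed.

End ComplementaryPairs.
End PseudoHoopTheory.

Theorem theorem4p2 (A : PseudoHoop) (M : A -> Prop) :
  (forall x1 y1 x2 y2 : A,
     perp A M x1 -> perp A (perp A M) y1 ->
     perp A M x2 -> perp A (perp A M) y2 ->
     ph_meet A x1 y1 = ph_meet A x2 y2 -> x1 = x2 /\ y1 = y2) /\
  (forall x1 y1 x2 y2 : A,
     perp A M x1 -> perp A (perp A M) y1 ->
     perp A M x2 -> perp A (perp A M) y2 ->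
     ph_mul (ph_meet A x1 y1) (ph_meet A x2 y2) = ph_meet A (ph_mul x1 x2) (ph_mul y1 y2) /\
     ph_imp (ph_meet A x1 y1) (ph_meet A x2 y2) = ph_meet A (ph_imp x1 x2) (ph_imp y1 y2) /\
     ph_limp (ph_meet A x1 y1) (ph_meet A x2 y2) = ph_meet A (ph_limp x1 x2) (ph_limp y1 y2)).
Proof.
  pose proof (@perp_perp_join A M) as J.
  split; intros x1 y1 x2 y2 Hx1 Hy1 Hx2 Hy2.
  - apply meet_inj; auto.
  - split; [|split]; [apply meet_mul | apply meet_imp | apply meet_limp]; auto.
Qed.
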